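(* Let $s\in[1/4,3/4]$, $\rho\ge2^{40}$, and let $g:(0,\infty)\to(0,\infty)$ be defined by $g(r):=\int_0^rg'(x)\,dx$, where $g'(r)=s\,r^{s-1}-s\rho^{s-1}$ for $r\in(0,\rho]$ and $g'(r)=0$ for $r\ge\rho$. Let $\lambda:[0,T]\to[0,1]$ be any function and define, for $v\in\mathbb{Z}\times\mathbb{R}$, $$B(t,v):=\langle v\rangle^3\exp[\lambda(t)g(\langle v\rangle)].$$ Then for all $t$ and $v,w\in\mathbb{Z}\times\mathbb{R}$, $$B(t,v+w)\lesssim B(t,v)B(t,w)\min(\langle v\rangle,\langle w\rangle)^{-3}.$$ Moreover, if $|v|\le|w|$ and $|w-v|\le|v|/4$, then $$|B(t,w)-B(t,v)|\lesssim[1+\lambda(t)g(\langle v\rangle)]\langle v\rangle^{-1}B(t,v)\cdot B(t,v-w)\langle v-w\rangle^{-2}.$$ The implicit constants are independent of $t$, $\lambda$, $s$, and $\rho$.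
   Context: $\langle v\rangle=(1+|v|^2)^{1/2}$ with $|v|$ the Euclidean norm of $v=(k,\xi)\in\mathbb{Z}\times\mathbb{R}\subset\mathbb{R}^2$. *)

From Stdlib Require Import Reals Lra.
Open Scope R_scope.

Definition ZR := (Z * R)%type.

Definition zr_add (v w : ZR) : ZR := ((fst v + fst w)%Z, snd v + snd w).
Definition zr_sub (v w : ZR) : ZR := ((fst v - fst w)%Z, snd v - snd w).

Definition zr_norm (v : ZR) : R := sqrt (IZR (fst v) ^ 2 + snd v ^ 2).
Definition jbr (v : ZR) : R := sqrt (1 + zr_norm v ^ 2).

Definition gprime (s rho r : R) : R :=
  if Rle_dec r rho then s * Rpower r (s - 1) - s * Rpower rho (s - 1) else 0.

(* g(r) = int_0^r g'(x) dx, computed in closed form: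
   r^s - s rho^{s-1} r for 0 < r <= rho, and (1-s) rho^s for r >= rho. *)
Definition gfun (s rho r : R) : R :=
  if Rle_dec r rho then Rpower r s - s * Rpower rho (s - 1) * r
  else Rpower rho s - s * Rpower rho (s - 1) * rho.

Definition Bw (s rho : R) (lam : R -> R) (t : R) (v : ZR) : R :=
  jbr v ^ 3 * exp (lam t * gfun s rho (jbr v)).

(* Write B(t,v) = W(<v>) with W(r) = r^3 exp(L phi(r)), L = lambda(t) in [0,1] and
   phi = g.  Only four properties of phi are used: phi >= 0, phi is nondecreasing,
   phi(c) <= phi(a) + phi(b) whenever c <= a + b, and the growth bound
   a (phi(b) - phi(a)) <= 4 phi(a) (b - a) for a <= b.  For g they follow from the
   concavity and subadditivity of r^s (with s <= 4/5 giving the constant 4) and from g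
   being constant beyond rho.  Since <v + w> <= <v> + <w>, the first estimate reduces to
   <v + w>^3 <= 8 max(<v>, <w>)^3.  For the second, a := <v> <= b := <w> <= 5a/4 and
   b - a <= |w - v| <= <v - w> =: d, and one splits
   W(b) - W(a) = (b^3 - a^3) e^{L phi(b)} + a^3 (e^{L phi(b)} - e^{L phi(a)}),
   bounding e^{L phi(b)} by e^{L phi(a)} e^{L phi(d)}. *)

From Stdlib Require Import Reals Lra Lia Psatz.
Open Scope R_scope.

Lemma exp_le x y : x <= y -> exp x <= exp y.
Proof.
  intros Hxy; destruct (Req_dec x y) as [-> | Hne]; [lra |].
  left; apply exp_increasing; lra.
Qed.

Lemma exp_increment_le x y : x <= y -> exp y - exp x <= (y - x) * exp y.
Proof.
  intros Hxy.
  assert (Hx : exp x = exp (x - y) * exp y) by (rewrite <- exp_plus; f_equal; ring).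
  pose proof (exp_ineq1_le (x - y)); pose proof (exp_pos y); nra.
Qed.

Lemma Rpower_gt0 x e : 0 < Rpower x e.
Proof. apply exp_pos. Qed.

Lemma Rpower_le_npos a b e : e <= 0 -> 0 < a <= b -> Rpower b e <= Rpower a e.
Proof.
  intros He Hab.
  replace e with (- - e) by ring; rewrite (Rpower_Ropp a), (Rpower_Ropp b).
  apply Rinv_le_contravar; [apply Rpower_gt0 |].
  apply Rle_Rpower_l; lra.
Qed.

Lemma Rpower_pred x e : 0 < x -> Rpower x e = x * Rpower x (e - 1).
Proof.
  intros Hx; replace e with (1 + (e - 1)) at 1 by ring.
  now rewrite Rpower_plus, Rpower_1.
Qed.

Lemma Rpower_increment_bounds s x y : 0 <= s <= 1 -> 0 < x <= y ->
  s * Rpower y (s - 1) * (y - x) <= Rpower y s - Rpower x s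
  <= s * Rpower x (s - 1) * (y - x).
Proof.
  intros Hs Hxy; destruct (Req_dec x y) as [-> | Hne]; [split; lra |].
  destruct (MVT_cor2 (fun z => Rpower z s) (fun z => s * Rpower z (s - 1)) x y)
    as [c [Hmvt Hc]]; [lra | intros c Hc; apply derivable_pt_lim_power; lra |].
  simpl in Hmvt; rewrite Hmvt.
  pose proof (Rpower_le_npos c y (s - 1) ltac:(lra) ltac:(lra)).
  pose proof (Rpower_le_npos x c (s - 1) ltac:(lra) ltac:(lra)).
  split; apply Rmult_le_compat_r; nra.
Qed.

Lemma Rpower_subadd s a b : s <= 1 -> 0 < a -> 0 < b ->
  Rpower (a + b) s <= Rpower a s + Rpower b s.
Proof.
  intros Hs Ha Hb; rewrite !(Rpower_pred _ s) by lra.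
  pose proof (Rpower_le_npos a (a + b) (s - 1) ltac:(lra) ltac:(lra)).
  pose proof (Rpower_le_npos b (a + b) (s - 1) ltac:(lra) ltac:(lra)).
  nra.
Qed.

Record admissible_exponent (phi : R -> R) : Prop := {
  exponent_ge0 : forall r, 0 < r -> 0 <= phi r;
  exponent_le : forall x y, 0 < x <= y -> phi x <= phi y;
  exponent_subadd : forall a b c, 0 < a -> 0 < b -> 0 < c <= a + b -> phi c <= phi a + phi b;
  exponent_increment_le : forall a b, 0 < a <= b -> a * (phi b - phi a) <= 4 * phi a * (b - a)
}.

Section Gfun.

Variables s rho : R.
Hypothesis s_gt0 : 0 < s.
Hypothesis s_le : s <= 4/5.
Hypothesis rho_gt0 : 0 < rho.

Local Notation g := (gfun s rho).

Lemma gfun_below r : r <= rho -> g r = Rpower r s - s * Rpower rho (s - 1) * r.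
Proof. intros Hr; unfold gfun; destruct (Rle_dec r rho); [reflexivity | lra]. Qed.

Lemma gfun_above r : rho <= r -> g r = (1 - s) * Rpower rho s.
Proof.
  intros Hr; unfold gfun.
  destruct (Rle_dec r rho); [replace r with rho by lra |];
    rewrite (Rpower_pred rho s) by lra; ring.
Qed.

Lemma gfun_lower_bound r : 0 < r <= rho -> (1 - s) * Rpower r s <= g r.
Proof.
  intros Hr; rewrite gfun_below, (Rpower_pred r s) by lra.
  pose proof (Rpower_le_npos r rho (s - 1) ltac:(lra) Hr).
  assert (0 <= s * r) by nra; nra.
Qed.

Lemma gfun_ge0 r : 0 < r -> 0 <= g r.
Proof.
  intros Hr; destruct (Rle_dec r rho).
  - pose proof (gfun_lower_bound r ltac:(lra)); pose proof (Rpower_gt0 r s); nra.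
  - rewrite gfun_above by lra; pose proof (Rpower_gt0 rho s); nra.
Qed.

Lemma gfun_le_below x y : 0 < x <= y -> y <= rho -> g x <= g y.
Proof.
  intros Hxy Hy; rewrite !gfun_below by lra.
  destruct (Rpower_increment_bounds s x y ltac:(lra) Hxy) as [Hmv _].
  pose proof (Rpower_le_npos y rho (s - 1) ltac:(lra) ltac:(lra)).
  assert (0 <= s * (y - x)) by nra; nra.
Qed.

Lemma gfun_le_max r : 0 < r -> g r <= (1 - s) * Rpower rho s.
Proof.
  intros Hr; destruct (Rle_dec r rho).
  - rewrite <- (gfun_above rho) by lra; apply gfun_le_below; lra.
  - rewrite gfun_above by lra; lra.
Qed.

Lemma gfun_le x y : 0 < x <= y -> g x <= g y.
Proof.
  intros Hxy; destruct (Rle_dec y rho); [apply gfun_le_below; lra |].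
  rewrite (gfun_above y) by lra; apply gfun_le_max; lra.
Qed.

Lemma gfun_subadd_below a b : 0 < a -> 0 < b -> a + b <= rho -> g (a + b) <= g a + g b.
Proof.
  intros Ha Hb Hab; rewrite !gfun_below by lra.
  pose proof (Rpower_subadd s a b ltac:(lra) Ha Hb); lra.
Qed.

Lemma gfun_subadd a b c : 0 < a -> 0 < b -> 0 < c <= a + b -> g c <= g a + g b.
Proof.
  intros Ha Hb Hc.
  pose proof (gfun_ge0 a Ha); pose proof (gfun_ge0 b Hb).
  apply Rle_trans with (g (a + b)); [apply gfun_le; lra |].
  destruct (Rle_dec (a + b) rho); [apply gfun_subadd_below; lra |].
  pose proof (gfun_le_max (a + b) ltac:(lra)).
  destruct (Rle_dec rho a); [rewrite (gfun_above a) by lra; lra |].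
  destruct (Rle_dec rho b); [rewrite (gfun_above b) by lra; lra |].
  (* [g] is constant on [rho, oo), and [rho = a + (rho - a)] with [rho - a < b] *)
  pose proof (gfun_subadd_below a (rho - a) Ha ltac:(lra) ltac:(lra)) as Hsplit.
  replace (a + (rho - a)) with rho in Hsplit by ring.
  rewrite (gfun_above rho) in Hsplit by lra.
  pose proof (gfun_le (rho - a) b ltac:(lra)); lra.
Qed.

Lemma gfun_increment_le a b : 0 < a <= b -> a * (g b - g a) <= 4 * g a * (b - a).
Proof.
  intros Hab.
  pose proof (gfun_ge0 a ltac:(lra)).
  destruct (Rle_dec rho a) as [Ha | Ha].
  { replace (g b) with (g a) by (rewrite !gfun_above by lra; reflexivity); nra. }
  set (b' := Rmin b rho).
  assert (Hb' : g b = g b').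
  { unfold b', Rmin; destruct (Rle_dec b rho); [reflexivity |].
    rewrite !gfun_above by lra; reflexivity. }
  assert (Hab' : a <= b' <= b) by (unfold b', Rmin; destruct (Rle_dec b rho); lra).
  assert (Hb'rho : b' <= rho) by apply Rmin_r.
  assert (Hlin : a * (g b' - g a) <= a * (Rpower b' s - Rpower a s)).
  { rewrite !gfun_below by lra.
    assert (0 < s * Rpower rho (s - 1)) by (apply Rmult_lt_0_compat; [lra | apply Rpower_gt0]).
    apply Rmult_le_compat_l; nra. }
  destruct (Rpower_increment_bounds s a b' ltac:(lra) ltac:(lra)) as [_ Hmv].
  pose proof (gfun_lower_bound a ltac:(lra)) as Hlow.
  rewrite (Rpower_pred a s) in Hlow by lra.
  set (P := a * Rpower a (s - 1)) in Hlow.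
  assert (HP : 0 < P) by (apply Rmult_lt_0_compat; [lra | apply Rpower_gt0]).
  assert (Hconcave : a * (Rpower b' s - Rpower a s) <= s * P * (b - a)).
  { apply Rle_trans with (a * (s * Rpower a (s - 1) * (b' - a))).
    - apply Rmult_le_compat_l; lra.
    - replace (a * (s * Rpower a (s - 1) * (b' - a))) with (s * P * (b' - a))
        by (unfold P; ring).
      apply Rmult_le_compat_l; nra. }
  (* [s <= 4 (1 - s)] is where the restriction on [s] enters *)
  assert (s * P * (b - a) <= 4 * g a * (b - a)) by (apply Rmult_le_compat_r; nra).
  rewrite Hb'; lra.
Qed.

Lemma gfun_admissible : admissible_exponent g.
Proof. split; [apply gfun_ge0 | apply gfun_le | apply gfun_subadd | apply gfun_increment_le]. Qed.

End Gfun.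

Definition weight (phi : R -> R) (L r : R) : R := r ^ 3 * exp (L * phi r).

Lemma pow3_le_min a b c : 0 < a -> 0 < b -> 0 < c <= a + b ->
  c ^ 3 <= 8 * (a ^ 3 * b ^ 3 / Rmin a b ^ 3).
Proof.
  intros Ha Hb Hc; destruct (Rle_dec a b).
  - rewrite Rmin_left by lra.
    replace (a ^ 3 * b ^ 3 / a ^ 3) with (b ^ 3) by (field; lra).
    pose proof (pow_incr c (2 * b) 3 ltac:(lra)); lra.
  - rewrite Rmin_right by lra.
    replace (a ^ 3 * b ^ 3 / b ^ 3) with (a ^ 3) by (field; lra).
    pose proof (pow_incr c (2 * a) 3 ltac:(lra)); lra.
Qed.

Lemma pow3_increment_le a b : 0 < a <= b -> b <= a + a / 4 ->
  b ^ 3 - a ^ 3 <= 4 * a ^ 2 * (b - a).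
Proof.
  intros Hab Hb.
  replace (b ^ 3 - a ^ 3) with ((b - a) * (b ^ 2 + a * b + a ^ 2)) by ring.
  replace (4 * a ^ 2 * (b - a)) with ((b - a) * (4 * a ^ 2)) by ring.
  apply Rmult_le_compat_l; nra.
Qed.

Section Weight.

Variables (phi : R -> R) (L : R).
Hypothesis phi_adm : admissible_exponent phi.
Hypothesis L_ge0 : 0 <= L.

Local Notation W := (weight phi L).

Lemma exp_exponent_subadd a b c : 0 < a -> 0 < b -> 0 < c <= a + b ->
  exp (L * phi c) <= exp (L * phi a) * exp (L * phi b).
Proof.
  intros Ha Hb Hc; rewrite <- exp_plus; apply exp_le.
  pose proof (exponent_subadd _ phi_adm a b c Ha Hb Hc); nra.
Qed.

Lemma weight_submult a b c : 0 < a -> 0 < b -> 0 < c <= a + b ->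
  W c <= 8 * (W a * W b / Rmin a b ^ 3).
Proof.
  intros Ha Hb Hc; unfold weight.
  pose proof (exp_exponent_subadd a b c Ha Hb Hc).
  pose proof (pow3_le_min a b c Ha Hb Hc).
  pose proof (exp_pos (L * phi c)).
  replace (8 * (a ^ 3 * exp (L * phi a) * (b ^ 3 * exp (L * phi b)) / Rmin a b ^ 3))
    with (8 * (a ^ 3 * b ^ 3 / Rmin a b ^ 3) * (exp (L * phi a) * exp (L * phi b)))
    by (unfold Rdiv; ring).
  apply Rmult_le_compat; try lra; apply pow_le; lra.
Qed.

Lemma exp_exponent_increment_le a b d : 0 < a <= b -> b - a <= d ->
  a * (exp (L * phi b) - exp (L * phi a)) <= 4 * (L * phi a) * d * exp (L * phi b).
Proof.
  intros Hab Hbad.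
  pose proof (exponent_ge0 _ phi_adm a ltac:(lra)).
  assert (HXY : L * phi a <= L * phi b)
    by (apply Rmult_le_compat_l; [| apply (exponent_le _ phi_adm)]; assumption).
  assert (Hgrowth : a * (L * phi b - L * phi a) <= 4 * (L * phi a) * d).
  { apply Rle_trans with (4 * (L * phi a) * (b - a)); [| apply Rmult_le_compat_l; nra].
    replace (a * (L * phi b - L * phi a)) with (L * (a * (phi b - phi a))) by ring.
    replace (4 * (L * phi a) * (b - a)) with (L * (4 * phi a * (b - a))) by ring.
    apply Rmult_le_compat_l; [| apply (exponent_increment_le _ phi_adm)]; assumption. }
  pose proof (exp_increment_le _ _ HXY); pose proof (exp_pos (L * phi b)).
  apply Rle_trans with (a * (L * phi b - L * phi a) * exp (L * phi b)).
  - rewrite Rmult_assoc; apply Rmult_le_compat_l; lra.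
  - apply Rmult_le_compat_r; lra.
Qed.

Lemma weight_increment_le a b d : 0 < a <= b -> b <= a + a / 4 -> 0 < d -> b - a <= d ->
  Rabs (W b - W a) <= 8 * ((1 + L * phi a) / a * W a * (W d / d ^ 2)).
Proof.
  intros Hab Hb Hd Hbad.
  pose proof (exp_exponent_subadd a d b ltac:(lra) Hd ltac:(lra)) as Hsplit.
  pose proof (exp_exponent_increment_le a b d Hab Hbad) as Hexp.
  pose proof (pow3_increment_le a b Hab Hb) as Hcube.
  pose proof (exponent_ge0 _ phi_adm a ltac:(lra)).
  unfold weight.
  set (X := L * phi a) in *; set (Y := L * phi b) in *; set (Z := L * phi d) in *.
  assert (HX : 0 <= X) by (unfold X; nra).
  assert (Hmono : a ^ 3 * exp X <= b ^ 3 * exp Y).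
  { apply Rmult_le_compat; [apply pow_le; lra | left; apply exp_pos | apply pow_incr; lra |].
    apply exp_le; unfold X, Y; apply Rmult_le_compat_l; [| apply (exponent_le _ phi_adm)];
      assumption. }
  rewrite Rabs_pos_eq by lra.
  replace (8 * ((1 + X) / a * (a ^ 3 * exp X) * (d ^ 3 * exp Z / d ^ 2)))
    with (2 * (4 * a ^ 2 * d * (1 + X)) * (exp X * exp Z)) by (field; lra).
  replace (b ^ 3 * exp Y - a ^ 3 * exp X)
    with ((b ^ 3 - a ^ 3) * exp Y + a ^ 2 * (a * (exp Y - exp X))) by ring.
  assert (Hpos : 0 <= 4 * a ^ 2 * d * (1 + X)).
  { pose proof (pow2_ge_0 a); apply Rmult_le_pos; [apply Rmult_le_pos |]; lra. }
  assert ((b ^ 3 - a ^ 3) * exp Y <= 4 * a ^ 2 * d * exp Y).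
  { apply Rmult_le_compat_r; [left; apply exp_pos |].
    pose proof (pow2_ge_0 a); nra. }
  assert (a ^ 2 * (a * (exp Y - exp X)) <= a ^ 2 * (4 * X * d * exp Y))
    by (apply Rmult_le_compat_l; [apply pow2_ge_0 | lra]).
  apply Rle_trans with (4 * a ^ 2 * d * (1 + X) * exp Y); [nra |].
  apply Rle_trans with (4 * a ^ 2 * d * (1 + X) * (exp X * exp Z));
    [apply Rmult_le_compat_l; lra |].
  pose proof (exp_pos X); pose proof (exp_pos Z); nra.
Qed.

End Weight.

Definition bracket (r : R) : R := sqrt (1 + r ^ 2).

Lemma jbr_bracket v : jbr v = bracket (zr_norm v).
Proof. reflexivity. Qed.

Lemma bracket_sqr r : bracket r * bracket r = 1 + r ^ 2.
Proof. apply sqrt_sqrt; nra. Qed.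

Lemma bracket_ge1 r : 1 <= bracket r.
Proof. rewrite <- sqrt_1; apply sqrt_le_1_alt; nra. Qed.

Lemma bracket_ge r : 0 <= r -> r <= bracket r.
Proof. intros Hr; rewrite <- (sqrt_square r) at 1 by lra; apply sqrt_le_1_alt; nra. Qed.

Lemma bracket_le m n : 0 <= m <= n -> bracket m <= bracket n.
Proof. intros Hmn; apply sqrt_le_1_alt; nra. Qed.

Lemma bracket_add_le m n : 0 <= m -> 0 <= n -> bracket (m + n) <= bracket m + bracket n.
Proof.
  intros Hm Hn.
  pose proof (bracket_ge m Hm); pose proof (bracket_ge n Hn).
  pose proof (bracket_ge1 m); pose proof (bracket_ge1 n).
  pose proof (bracket_sqr m); pose proof (bracket_sqr n).
  rewrite <- (sqrt_square (bracket m + bracket n)) by lra.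
  apply sqrt_le_1_alt; nra.
Qed.

Lemma bracket_sub_le m n : 0 <= m <= n -> bracket n - bracket m <= n - m.
Proof.
  intros Hmn.
  pose proof (bracket_ge m ltac:(lra)); pose proof (bracket_ge n ltac:(lra)).
  pose proof (bracket_sqr m); pose proof (bracket_sqr n).
  pose proof (bracket_le m n Hmn).
  assert ((bracket n - bracket m) * (bracket n + bracket m) = (n - m) * (n + m)) by nra.
  nra.
Qed.

Lemma sqrt_sum_sq_triangle x1 y1 x2 y2 :
  sqrt ((x1 + x2) ^ 2 + (y1 + y2) ^ 2) <= sqrt (x1 ^ 2 + y1 ^ 2) + sqrt (x2 ^ 2 + y2 ^ 2).
Proof.
  pose proof (sqrt_cauchy x1 y1 x2 y2) as Hcs; unfold Rsqr in Hcs.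
  replace (x1 * x1 + y1 * y1) with (x1 ^ 2 + y1 ^ 2) in Hcs by ring.
  replace (x2 * x2 + y2 * y2) with (x2 ^ 2 + y2 ^ 2) in Hcs by ring.
  assert (H1 : sqrt (x1 ^ 2 + y1 ^ 2) * sqrt (x1 ^ 2 + y1 ^ 2) = x1 ^ 2 + y1 ^ 2)
    by (apply sqrt_sqrt; nra).
  assert (H2 : sqrt (x2 ^ 2 + y2 ^ 2) * sqrt (x2 ^ 2 + y2 ^ 2) = x2 ^ 2 + y2 ^ 2)
    by (apply sqrt_sqrt; nra).
  pose proof (sqrt_pos (x1 ^ 2 + y1 ^ 2)); pose proof (sqrt_pos (x2 ^ 2 + y2 ^ 2)).
  rewrite <- (sqrt_square (sqrt (x1 ^ 2 + y1 ^ 2) + sqrt (x2 ^ 2 + y2 ^ 2))) by lra.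
  apply sqrt_le_1_alt; nra.
Qed.

Lemma zr_norm_ge0 v : 0 <= zr_norm v.
Proof. apply sqrt_pos. Qed.

Lemma zr_norm_add_le v w : zr_norm (zr_add v w) <= zr_norm v + zr_norm w.
Proof.
  destruct v as [k1 x1], w as [k2 x2]; unfold zr_norm, zr_add; simpl.
  rewrite plus_IZR; apply sqrt_sum_sq_triangle.
Qed.

Lemma zr_norm_sub_comm v w : zr_norm (zr_sub v w) = zr_norm (zr_sub w v).
Proof.
  destruct v as [k1 x1], w as [k2 x2]; unfold zr_norm, zr_sub; simpl.
  rewrite !minus_IZR; f_equal; ring.
Qed.

Lemma zr_norm_le_add_sub v w : zr_norm w <= zr_norm v + zr_norm (zr_sub w v).
Proof.
  replace w with (zr_add v (zr_sub w v)) at 1 by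
    (destruct v as [k1 x1], w as [k2 x2]; unfold zr_add, zr_sub; simpl; f_equal; [lia | ring]).
  apply zr_norm_add_le.
Qed.

Lemma jbr_ge1 v : 1 <= jbr v.
Proof. apply bracket_ge1. Qed.

Lemma zr_norm_le_jbr v : zr_norm v <= jbr v.
Proof. apply bracket_ge, zr_norm_ge0. Qed.

Lemma jbr_add_le v w : jbr (zr_add v w) <= jbr v + jbr w.
Proof.
  rewrite !jbr_bracket.
  pose proof (zr_norm_ge0 v); pose proof (zr_norm_ge0 w).
  apply Rle_trans with (bracket (zr_norm v + zr_norm w)).
  - apply bracket_le; split; [apply zr_norm_ge0 | apply zr_norm_add_le].
  - apply bracket_add_le; assumption.
Qed.

Lemma jbr_le v w : zr_norm v <= zr_norm w -> jbr v <= jbr w.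
Proof. intros Hvw; apply bracket_le; split; [apply zr_norm_ge0 | exact Hvw]. Qed.

Lemma jbr_sub_le v w : zr_norm v <= zr_norm w -> jbr w - jbr v <= zr_norm (zr_sub w v).
Proof.
  intros Hvw; pose proof (zr_norm_le_add_sub v w).
  pose proof (bracket_sub_le (zr_norm v) (zr_norm w) (conj (zr_norm_ge0 v) Hvw)).
  rewrite !jbr_bracket; lra.
Qed.

Lemma Bw_weight s rho lam t v : Bw s rho lam t v = weight (gfun s rho) (lam t) (jbr v).
Proof. reflexivity. Qed.

Theorem lemmaA3 :
  exists C : R, 0 < C /\
  forall (s rho T : R) (lam : R -> R),
    1/4 <= s <= 3/4 ->
    2 ^ 40 <= rho ->
    (forall t, 0 <= t <= T -> 0 <= lam t <= 1) ->
    forall (t : R) (v w : ZR), 0 <= t <= T ->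
      Bw s rho lam t (zr_add v w)
        <= C * (Bw s rho lam t v * Bw s rho lam t w / Rmin (jbr v) (jbr w) ^ 3)
      /\
      (zr_norm v <= zr_norm w -> zr_norm (zr_sub w v) <= zr_norm v / 4 ->
       Rabs (Bw s rho lam t w - Bw s rho lam t v)
         <= C * ((1 + lam t * gfun s rho (jbr v)) / jbr v * Bw s rho lam t v
                 * (Bw s rho lam t (zr_sub v w) / jbr (zr_sub v w) ^ 2))).
Proof.
  exists 8; split; [lra |].
  intros s rho T lam Hs Hrho Hlam t v w Ht.
  assert (Hg : admissible_exponent (gfun s rho)).
  { pose proof (pow_lt 2 40 ltac:(lra)); apply gfun_admissible; lra. }
  assert (HL : 0 <= lam t) by apply (Hlam t Ht).
  pose proof (jbr_ge1 v); pose proof (jbr_ge1 w).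
  rewrite !Bw_weight; split.
  - pose proof (jbr_ge1 (zr_add v w)); pose proof (jbr_add_le v w).
    apply weight_submult; auto; lra.
  - intros Hvw Hwv.
    pose proof (jbr_le v w Hvw); pose proof (jbr_sub_le v w Hvw).
    pose proof (zr_norm_le_jbr v); pose proof (zr_norm_le_jbr (zr_sub v w)) as Hd.
    rewrite zr_norm_sub_comm in Hd.
    pose proof (jbr_ge1 (zr_sub v w)).
    apply weight_increment_le; auto; lra.
Qed.
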